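(* Let $D$ be a transition diagram satisfying conditions (1)–(5) below. Then, for rows (and analogously for columns): (1) If two rows differ at two positions, then there is a short loop between these two rows. (2) If two rows differ at all three positions, then there are precisely two short loops between them. (3) If two rows coincide at two positions, then there is a short loop between each of these rows and the third row; in particular $D$ has at least two short loops. (4) If two rows coincide at all three positions, then there are precisely two short loops between each of these rows and the third row, and $D$ has precisely four short loops. The same statements hold with rows and columns interchanged.
   Context: A transition diagram is a relation $\to$ on cells $(i,j)$, $i,j\in\{1,2,3\}$, such that for every $j$ and $i\ne i'$ exactly one of $(i,j)\to(i',j)$, $(i',j)\to(i,j)$ holds (vertical arrows), for every $i$ and $j\ne j'$ exactly one of $(i,j)\to(i,j')$, $(i,j')\to(i,j)$ holds (horizontal arrows), and no other pairs are related. Conditions: (1) no row has horizontal arrows forming a directed 3-cycle and no column has vertical arrows forming a directed 3-cycle; (2) there are no $i\ne i'$ with $(i,j)\to(i',j)$ for all $j$, and no $j\ne j'$ with $(i,j)\to(i,j')$ for all $i$; (3) no cell all of whose four incident arrows point into it (no sink); (4) no cell all of whose four incident arrows point out of it (no source); (5) no alternating cycle, i.e. no sequence of cells $(i_0,j_0),\dots,(i_n,j_n)=(i_0,j_0)$, consecutive ones differing in exactly one coordinate, which follows the arrows on all vertical steps and goes against them on all horizontal steps, or vice versa. A short loop is a directed loop $(i,j)\to(i',j)\to(i',j')\to(i,j')\to(i,j)$ with $i\ne i'$, $j\ne j'$, lying between rows $i,i'$ and between columns $j,j'$. Two rows $i\ne i'$ coincide at the position between columns $j\ne j'$ if $(i,j)\to(i,j')$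 holds iff $(i',j)\to(i',j')$ holds, and differ there otherwise; there are three positions (the three pairs of columns). Analogously for two columns at positions given by pairs of rows. *)

From mathcomp Require Import all_boot.
Set Implicit Arguments. Unset Strict Implicit. Unset Printing Implicit Defensive.

(* A cell (i, j): row i, column j, with i, j in {1,2,3} represented as 'I_3. *)
Definition cell := ('I_3 * 'I_3)%type.

Section TD.
Variable arr : rel cell.

Definition vstep (c d : cell) : bool := (c.2 == d.2) && (c.1 != d.1).
Definition hstep (c d : cell) : bool := (c.1 == d.1) && (c.2 != d.2).
Definition adjacent (c d : cell) : bool := vstep c d || hstep c d.

Definition transition_diagram : Prop :=
  [/\ (forall (j i i' : 'I_3), i != i' -> arr (i, j) (i', j) != arr (i', j) (i, j)),
      (forall (i j j' : 'I_3), j != j' -> arr (i, j) (i, j') != arr (i, j') (i, j))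
    & (forall c d : cell, arr c d -> adjacent c d)].

Definition cond1 : Prop :=
  (forall (i j1 j2 j3 : 'I_3),
      ~ [&& arr (i, j1) (i, j2), arr (i, j2) (i, j3) & arr (i, j3) (i, j1)]) /\
  (forall (j i1 i2 i3 : 'I_3),
      ~ [&& arr (i1, j) (i2, j), arr (i2, j) (i3, j) & arr (i3, j) (i1, j)]).

Definition cond2 : Prop :=
  (forall (i i' : 'I_3), i != i' -> ~ (forall j : 'I_3, arr (i, j) (i', j))) /\
  (forall (j j' : 'I_3), j != j' -> ~ (forall i : 'I_3, arr (i, j) (i, j'))).

Definition cond3 : Prop :=
  forall c : cell, ~ (forall d : cell, adjacent c d -> arr d c).

Definition cond4 : Prop :=
  forall c : cell, ~ (forall d : cell, adjacent c d -> arr c d).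

Definition alt_step1 (c d : cell) : bool :=
  (vstep c d && arr c d) || (hstep c d && arr d c).
Definition alt_step2 (c d : cell) : bool :=
  (vstep c d && arr d c) || (hstep c d && arr c d).

Definition cond5 : Prop :=
  forall (c0 : cell) (p : seq cell), p != [::] -> last c0 p = c0 ->
    ~ path alt_step1 c0 p /\ ~ path alt_step2 c0 p.

Definition short_loop_at (i i' j j' : 'I_3) : bool :=
  [&& i != i', j != j', arr (i, j) (i', j), arr (i', j) (i', j'),
      arr (i', j') (i, j') & arr (i, j') (i, j)].

(* a short loop, identified with its set of four cells (the cyclic orientation
   is then determined by arr) *)
Definition short_loops : {set {set cell}} :=
  [set S : {set cell} | [exists i : 'I_3, exists i' : 'I_3, exists j : 'I_3,
     exists j' : 'I_3, short_loop_at i i' j j' &&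
       (S == [set (i, j); (i', j); (i', j'); (i, j')])]].

Definition loops_between_rows (i i' : 'I_3) : {set {set cell}} :=
  [set S in short_loops | [forall c in S, (c.1 == i) || (c.1 == i')]].
Definition loops_between_cols (j j' : 'I_3) : {set {set cell}} :=
  [set S in short_loops | [forall c in S, (c.2 == j) || (c.2 == j')]].

Definition rows_coincide (i i' j j' : 'I_3) : bool :=
  arr (i, j) (i, j') == arr (i', j) (i', j').
Definition cols_coincide (j j' i i' : 'I_3) : bool :=
  arr (i, j) (i', j) == arr (i, j') (i', j').

(* positions = unordered pairs of distinct indices, encoded as (a, b) with a < b *)
Definition positions : {set 'I_3 * 'I_3} := [set p : 'I_3 * 'I_3 | (p.1 < p.2)%N].

Definition n_rows_differ (i i' : 'I_3) : nat :=
  #|[set p in positions | ~~ rows_coincide i i' p.1 p.2]|.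
Definition n_rows_coincide (i i' : 'I_3) : nat :=
  #|[set p in positions | rows_coincide i i' p.1 p.2]|.
Definition n_cols_differ (j j' : 'I_3) : nat :=
  #|[set p in positions | ~~ cols_coincide j j' p.1 p.2]|.
Definition n_cols_coincide (j j' : 'I_3) : nat :=
  #|[set p in positions | cols_coincide j j' p.1 p.2]|.

End TD.

From mathcomp Require Import all_boot zify.
Set Implicit Arguments. Unset Strict Implicit. Unset Printing Implicit Defensive.

(* By condition (1) every row is a linear order of the three columns.  A short
   loop between rows i, i' at columns j, j' needs the rows to differ at {j, j'}
   and the vertical arrows in columns j and j' to point in opposite directions,
   so two rows never carry three loops.
   If column m is last in row i and first in row i', then (i, m) -> (i', m):
   otherwise, whatever the third row does, (i, m) is a sink, (i', m) is a
   source, or column m contains a 3-cycle.  Two rows differing at two positions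
   have such an extremal column m, and condition (2) gives a column whose
   vertical arrow points back, closing a loop through m.  Reversed rows have two
   extremal columns, and they yield exactly two loops.
   Condition (2) for columns says that at no position all three rows agree, so
   where rows i and i' coincide, row i and the third row differ; this reduces
   parts (3) and (4) of the theorem to parts (1) and (2).  Columns follow by
   transposing the diagram. *)

Definition row_properties (arr : rel cell) : Prop :=
  forall i i' : 'I_3, i != i' ->
     (2 <= n_rows_differ arr i i' -> loops_between_rows arr i i' != set0) /\
     (n_rows_differ arr i i' = 3 -> #|loops_between_rows arr i i'| = 2) /\
     (forall k : 'I_3, k != i -> k != i' ->
        (2 <= n_rows_coincide arr i i' ->
           [/\ loops_between_rows arr i k != set0,
               loops_between_rows arr i' k != set0
             & 2 <= #|short_loops arr|]) /\
        (n_rows_coincide arr i i' = 3 ->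
           [/\ #|loops_between_rows arr i k| = 2,
               #|loops_between_rows arr i' k| = 2
             & #|short_loops arr| = 4])).

Definition column_properties (arr : rel cell) : Prop :=
  forall j j' : 'I_3, j != j' ->
     (2 <= n_cols_differ arr j j' -> loops_between_cols arr j j' != set0) /\
     (n_cols_differ arr j j' = 3 -> #|loops_between_cols arr j j'| = 2) /\
     (forall k : 'I_3, k != j -> k != j' ->
        (2 <= n_cols_coincide arr j j' ->
           [/\ loops_between_cols arr j k != set0,
               loops_between_cols arr j' k != set0
             & 2 <= #|short_loops arr|]) /\
        (n_cols_coincide arr j j' = 3 ->
           [/\ #|loops_between_cols arr j k| = 2,
               #|loops_between_cols arr j' k| = 2
             & #|short_loops arr| = 4])).

(** * Indices and positions *)

Lemma ord3_cover (a b c : 'I_3) : a != b -> a != c -> b != c ->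
  forall x, [|| x == a, x == b | x == c].
Proof. move=> + + + x; move: a b c x; by do 4!case=> [[|[|[|?]]] ?] //. Qed.

Lemma ord3_complement (m : 'I_3) : exists x y : 'I_3, [/\ x != m, y != m & x != y].
Proof.
case: m => [[|[|[|?]]] ?] //.
- by exists (@Ordinal 3 1 isT), (@Ordinal 3 2 isT).
- by exists (@Ordinal 3 0 isT), (@Ordinal 3 2 isT).
- by exists (@Ordinal 3 0 isT), (@Ordinal 3 1 isT).
Qed.

Lemma ord3_third (a b : 'I_3) : exists c : 'I_3, (a != c) && (b != c).
Proof.
have [x [y [xa ya xy]]] := ord3_complement a.
case: (eqVneq x b) => [<-|xb]; first by exists y; rewrite eq_sym ya xy.
by exists x; rewrite eq_sym xa eq_sym xb.
Qed.

Lemma ord3_triple : exists a b c : 'I_3, [/\ a != b, a != c & b != c].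
Proof.
have [b [c [? ? ?]]] := ord3_complement ord0.
by exists ord0, b, c; rewrite ![ord0 == _]eq_sym.
Qed.

Lemma pair_meet (x i i' k : 'I_3) :
  i != i' -> (x == i) || (x == k) -> (x == i') || (x == k) -> x = k.
Proof.
move=> ii' /orP[/eqP->|/eqP->//] /orP[/eqP ii'E|/eqP//].
by rewrite ii'E eqxx in ii'.
Qed.

Lemma position_of_pair (j j' : 'I_3) :
  j != j' -> exists2 p, p \in positions & p = (j, j') \/ p = (j', j).
Proof.
case: (ltngtP j j') => [lt|gt|/val_inj->]; last by rewrite eqxx.
  by exists (j, j'); rewrite ?inE //; left.
by exists (j', j); rewrite ?inE //; right.
Qed.

Lemma card_positions (P : 'I_3 -> 'I_3 -> bool) (a b c : 'I_3) :
  (forall x y, P x y = P y x) -> a != b -> a != c -> b != c ->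
  #|[set p in positions | P p.1 p.2]| = P a b + P a c + P b c.
Proof.
move=> Psym.
pose o0 := @Ordinal 3 0 isT; pose o1 := @Ordinal 3 1 isT; pose o2 := @Ordinal 3 2 isT.
pose s := [:: (o0, o1); (o0, o2); (o1, o2)].
have -> : #|[set p in positions | P p.1 p.2]| = count (fun p => P p.1 p.2) s.
  rewrite -size_filter -(card_uniqP (filter_uniq _ (isT : uniq s))).
  apply: eq_card => p; rewrite !inE mem_filter andbC; congr (_ && _).
  by case: p => -[[|[|[|?]]] ?] -[[|[|[|?]]] ?].
rewrite /= addn0 addnA => ab ac bc.
have cover := ord3_cover (isT : o0 != o1) (isT : o0 != o2) (isT : o1 != o2).
move: ab ac bc; case/or3P: (cover a) => /eqP->; case/or3P: (cover b) => /eqP->;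
  case/or3P: (cover c) => /eqP-> // _ _ _;
  rewrite ?(Psym o1 o0) ?(Psym o2 o0) ?(Psym o2 o1); lia.
Qed.

Lemma two_of_three (P : 'I_3 -> 'I_3 -> bool) (a b c : 'I_3) :
  (forall x y, P x y = P y x) -> a != b -> a != c -> b != c ->
  1 < P a b + P a c + P b c ->
  exists m x y, [/\ m != x, m != y, x != y, P m x & P m y].
Proof.
move=> Psym ab ac bc.
case Pab: (P a b); case Pac: (P a c); case Pbc: (P b c) => // _.
- by exists a, b, c; rewrite Pab Pac.
- by exists a, b, c; rewrite Pab Pac.
- by exists b, a, c; rewrite Psym Pab Pbc eq_sym.
by exists c, a, b; rewrite Psym Pac Psym Pbc ![c == _]eq_sym.
Qed.

Definition rect (i i' j j' : 'I_3) : {set cell} := [set (i, j); (i', j); (i', j'); (i, j')].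

Lemma rectC i i' j j' : rect i' i j j' = rect i i' j j'.
Proof. by apply/setP => c; rewrite !inE; case: eqP; case: eqP; case: eqP; case: eqP. Qed.

Lemma rect_sym i i' j j' : rect i i' j' j = rect i i' j j'.
Proof. by apply/setP => c; rewrite !inE; case: eqP; case: eqP; case: eqP; case: eqP. Qed.

Lemma rect_rowsE i i' j j' x y :
  [forall c in rect i i' j j', (c.1 == x) || (c.1 == y)] =
  ((i == x) || (i == y)) && ((i' == x) || (i' == y)).
Proof.
apply/forall_inP/andP => [h | [hi hi'] c].
  by split; [apply: (h (i, j)) | apply: (h (i', j))]; rewrite /rect !inE eqxx ?orbT.
by rewrite /rect !inE -!orbA => /or4P[] /eqP->.
Qed.

Lemma rect_inj (i i' : 'I_3) : {in positions &, injective (fun p => rect i i' p.1 p.2)}.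
Proof.
move=> [j j'] [l l'] /[!inE] /= jj' ll' /setP E.
have col c : c \in rect i i' j j' -> (c.2 == l) || (c.2 == l').
  by rewrite E /rect !inE -!orbA => /or4P[] /eqP->; rewrite eqxx ?orbT.
have hj : (j == l) || (j == l') by apply: (col (i, j)); rewrite /rect !inE eqxx.
have hj' : (j' == l) || (j' == l') by apply: (col (i, j')); rewrite /rect !inE eqxx ?orbT.
case/orP: hj => /eqP hj; case/orP: hj' => /eqP hj'; subst; rewrite ?ltnn // in jj'.
by have := ltn_trans jj' ll'; rewrite ltnn.
Qed.

Section Rows.

Variable arr : rel cell.
Hypothesis td : transition_diagram arr.
Hypothesis no_cycle3 : cond1 arr.
Hypothesis no_domination : cond2 arr.
Hypothesis no_sink : cond3 arr.
Hypothesis no_source : cond4 arr.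

(** * Short loops between two rows *)

Lemma arr_hflip i j j' : j != j' -> arr (i, j') (i, j) = ~~ arr (i, j) (i, j').
Proof. by case: td => _ /(_ i j j') + _ => /[apply]; case: (arr _ _); case: (arr _ _). Qed.

Lemma arr_vflip i i' j : i != i' -> arr (i', j) (i, j) = ~~ arr (i, j) (i', j).
Proof. by case: td => /(_ j i i') + _ _ => /[apply]; case: (arr _ _); case: (arr _ _). Qed.

Lemma rows_coincideC i i' j j' : rows_coincide arr i' i j j' = rows_coincide arr i i' j j'.
Proof. exact: eq_sym. Qed.

Lemma rows_coincide_sym i i' j j' : rows_coincide arr i i' j' j = rows_coincide arr i i' j j'.
Proof.
rewrite /rows_coincide; case: (eqVneq j j') => [-> // | jj'].
by rewrite (arr_hflip i jj') (arr_hflip i' jj') (inj_eq negb_inj).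
Qed.

Lemma n_rows_coincideE i i' a b c : a != b -> a != c -> b != c ->
  n_rows_coincide arr i i' =
  rows_coincide arr i i' a b + rows_coincide arr i i' a c + rows_coincide arr i i' b c.
Proof.
move=> ab ac bc; rewrite /n_rows_coincide.
rewrite (@card_positions (rows_coincide arr i i') _ _ _ _ ab ac bc) // => x y.
by rewrite rows_coincide_sym.
Qed.

Lemma n_rows_differE i i' a b c : a != b -> a != c -> b != c ->
  n_rows_differ arr i i' =
  ~~ rows_coincide arr i i' a b + ~~ rows_coincide arr i i' a c +
  ~~ rows_coincide arr i i' b c.
Proof.
move=> ab ac bc; rewrite /n_rows_differ.
rewrite (@card_positions (fun x y => ~~ rows_coincide arr i i' x y) _ _ _ _ ab ac bc) // => x y.
by rewrite rows_coincide_sym.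
Qed.

Lemma n_rows_coincideC i i' : n_rows_coincide arr i' i = n_rows_coincide arr i i'.
Proof. by apply: eq_card => p; rewrite !inE rows_coincideC. Qed.

Lemma n_rows_coincide_add_differ i i' : n_rows_coincide arr i i' + n_rows_differ arr i i' = 3.
Proof.
have [a [b [c [ab ac bc]]]] := ord3_triple.
rewrite (n_rows_coincideE _ _ ab ac bc) (n_rows_differE _ _ ab ac bc).
by case: (rows_coincide _ _ _ a b); case: (rows_coincide _ _ _ a c);
  case: (rows_coincide _ _ _ b c).
Qed.

(* Both orientations of the rectangle: [short_loop_at] fixes the direction. *)
Definition loop_on i i' j j' := short_loop_at arr i i' j j' || short_loop_at arr i' i j j'.

Lemma short_loop_at_opp i i' j j' : short_loop_at arr i' i j' j = short_loop_at arr i i' j j'.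
Proof.
rewrite /short_loop_at (eq_sym i') (eq_sym j').
move: (arr (i, j) (i', j)) (arr (i', j) (i', j')) (arr (i', j') (i, j')) (arr (i, j') (i, j)).
by case: (i != i'); case: (j != j') => -[] [] [] [].
Qed.

Lemma loop_onC i i' j j' : loop_on i' i j j' = loop_on i i' j j'.
Proof. exact: orbC. Qed.

Lemma loop_on_sym i i' j j' : loop_on i i' j' j = loop_on i i' j j'.
Proof. by rewrite /loop_on short_loop_at_opp orbC short_loop_at_opp. Qed.

Lemma loop_on_rows_differ i i' j j' : loop_on i i' j j' -> ~~ rows_coincide arr i i' j j'.
Proof.
by rewrite /rows_coincide => /orP[] /and3P[_ jj' /and4P[_ h1 _]];
  rewrite arr_hflip // h1 => /negbTE->.
Qed.

Lemma loop_on_vertical_differ i i' j j' :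
  loop_on i i' j j' -> arr (i, j) (i', j) != arr (i, j') (i', j').
Proof.
case/orP=> /and3P[ii' _ /and4P[h1 _ h2 _]].
  by rewrite h1; move: h2; rewrite arr_vflip.
by move: h1 h2; rewrite arr_vflip 1?eq_sym // => /negbTE->->.
Qed.

Lemma loop_on_count_le2 i i' a b c : loop_on i i' a b + loop_on i i' a c + loop_on i i' b c <= 2.
Proof.
case ab: (loop_on i i' a b); case ac: (loop_on i i' a c); case bc: (loop_on i i' b c) => //.
move: (loop_on_vertical_differ ab) (loop_on_vertical_differ ac) (loop_on_vertical_differ bc).
by case: (arr (i, a) _); case: (arr (i, b) _); case: (arr (i, c) _).
Qed.

Lemma short_loopsP S :
  reflect (exists i i' j j', short_loop_at arr i i' j j' /\ S = rect i i' j j')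
          (S \in short_loops arr).
Proof.
rewrite inE; apply: (iffP existsP) => [[i] | [i [i' [j [j' [h ->]]]]]].
  by case/existsP=> i' /existsP[j /existsP[j' /andP[h /eqP->]]]; exists i, i', j, j'.
by exists i; apply/existsP; exists i'; apply/existsP; exists j; apply/existsP; exists j';
  rewrite h eqxx.
Qed.

Lemma in_loops_between_rows S i i' : (S \in loops_between_rows arr i i') =
  (S \in short_loops arr) && [forall c in S, (c.1 == i) || (c.1 == i')].
Proof. by rewrite inE. Qed.

Lemma loops_between_rowsC i i' : loops_between_rows arr i' i = loops_between_rows arr i i'.
Proof.
apply/setP => S; rewrite !inE; congr (_ && _).
by apply: eq_forallb_in => c _; rewrite orbC.
Qed.

Lemma rect_in_loops_between_rows i i' j j' :
  short_loop_at arr i i' j j' -> rect i i' j j' \in loops_between_rows arr i i'.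
Proof.
move=> h; rewrite inE rect_rowsE !eqxx /= orbT andbT.
by apply/short_loopsP; exists i, i', j, j'.
Qed.

Lemma loops_between_rowsE i i' : i != i' ->
  loops_between_rows arr i i' =
  [set rect i i' p.1 p.2 | p in [set p in positions | loop_on i i' p.1 p.2]].
Proof.
move=> ii'; apply/setP => S; apply/idP/imsetP => [|[[j j'] hp ->]]; last first.
  rewrite !inE /= in hp; case/andP: hp => _ /orP[] h.
    exact: rect_in_loops_between_rows.
  by rewrite -rectC -loops_between_rowsC; apply: rect_in_loops_between_rows.
rewrite inE => /andP[/short_loopsP[a [a' [j [j' [h ->]]]]]].
rewrite rect_rowsE => /andP[ha ha'].
have [aa' jj'] : a != a' /\ j != j' by case/and3P: h.
have {h} : loop_on a a' j j' by rewrite /loop_on h.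
have [[-> ->] | [-> ->]] : (a = i /\ a' = i') \/ (a = i' /\ a' = i).
  by move: aa'; case/orP: ha => /eqP->; case/orP: ha' => /eqP->; rewrite ?eqxx //;
    [left | right].
2: rewrite (@rectC i) (@loop_onC i).
all: move=> hl; have [p pos ep] := position_of_pair jj'; exists p;
  by case: ep pos => -> /[!inE] pos; rewrite ?inE ?pos //= 1?loop_on_sym 1?rect_sym.
Qed.

Lemma card_loops_between_rows i i' : i != i' ->
  #|loops_between_rows arr i i'| = #|[set p in positions | loop_on i i' p.1 p.2]|.
Proof.
move=> ii'; rewrite loops_between_rowsE // card_in_imset // => p q.
by rewrite !inE => /andP[pp _] /andP[qq _]; apply: rect_inj; rewrite inE.
Qed.

Lemma card_loops_between_rowsE i i' a b c : i != i' -> a != b -> a != c -> b != c ->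
  #|loops_between_rows arr i i'| = loop_on i i' a b + loop_on i i' a c + loop_on i i' b c.
Proof.
move=> ii' ab ac bc; rewrite card_loops_between_rows //.
by rewrite (@card_positions (loop_on i i') _ _ _ _ ab ac bc) // => x y; rewrite loop_on_sym.
Qed.

Lemma card_loops_le_differ i i' : i != i' ->
  #|loops_between_rows arr i i'| <= n_rows_differ arr i i'.
Proof.
move=> ii'; rewrite card_loops_between_rows //; apply: subset_leq_card.
by apply/subsetP => p; rewrite !inE => /andP[-> /loop_on_rows_differ].
Qed.

(** * Extremal columns *)

(* Column m is the last one of row i and the first one of row i'. *)
Definition row_corner i i' m :=
  forall j, j != m -> arr (i, j) (i, m) && arr (i', m) (i', j).

Lemma row_cornerI i i' m x y : m != x -> m != y -> x != y ->
  arr (i, x) (i, m) -> arr (i, y) (i, m) -> arr (i', m) (i', x) -> arr (i', m) (i', y) ->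
  row_corner i i' m.
Proof.
move=> mx my xy hx hy hx' hy' j jm.
case/or3P: (ord3_cover mx my xy j) => /eqP ?; subst j;
  [by rewrite eqxx in jm | by rewrite hx hx' | by rewrite hy hy'].
Qed.

Lemma corner_loop i i' m j : i != i' -> j != m -> row_corner i i' m ->
  arr (i, m) (i', m) -> arr (i', j) (i, j) -> short_loop_at arr i i' m j.
Proof.
move=> ii' jm /(_ j jm)/andP[h1 h2] v h3.
by rewrite /short_loop_at ii' eq_sym jm v h2 h3 h1.
Qed.

Lemma corner_vertical i i' m : i != i' -> row_corner i i' m -> arr (i, m) (i', m).
Proof.
move=> ii' hc; have [k /andP[ik i'k]] := ord3_third i i'.
have cover := ord3_cover ii' ik i'k.
case v: (arr (i, m) (i', m)) => //; exfalso.
have down : arr (i, m) (k, m).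
  case kim: (arr (i, m) (k, m)) => //; exfalso; apply: (@no_sink (i, m)) => -[r j].
  case/orP => /andP[/eqP /= <- /= ri]; last by rewrite eq_sym in ri; case/andP: (hc j ri).
  case/or3P: (cover r) => /eqP ?; subst r;
    [by rewrite eqxx in ri | by rewrite arr_vflip // v | by rewrite arr_vflip ?kim].
have up : arr (k, m) (i', m).
  case kim: (arr (k, m) (i', m)) => //; exfalso; apply: (@no_source (i', m)) => -[r j].
  case/orP => /andP[/eqP /= <- /= ri]; last by rewrite eq_sym in ri; case/andP: (hc j ri).
  case/or3P: (cover r) => /eqP ?; subst r;
    [by rewrite arr_vflip // v | by rewrite eqxx in ri | by rewrite arr_vflip ?kim // eq_sym].
case: no_cycle3 => _ /(_ m i' i k); apply.
by rewrite arr_vflip // v down up.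
Qed.

(* By transitivity of rows i and i', the column x is extremal. *)
Lemma row_corner_mixed i i' m x y : m != x -> m != y -> x != y ->
  arr (i, x) (i, m) -> arr (i, m) (i, y) -> arr (i', m) (i', x) -> arr (i', y) (i', m) ->
  row_corner i' i x.
Proof.
move=> mx my xy ixm imy i'mx i'ym; have [nc _] := no_cycle3.
have ixy : arr (i, x) (i, y).
  case h: (arr (i, x) (i, y)) => //; case: (nc i x m y).
  by rewrite ixm imy arr_hflip ?h.
have i'yx : arr (i', y) (i', x).
  case h: (arr (i', y) (i', x)) => //; case: (nc i' y m x).
  by rewrite i'ym i'mx arr_hflip ?h // eq_sym.
by apply: (row_cornerI (x := m) (y := y)); rewrite // eq_sym.
Qed.

Lemma corner_of_differ i i' m x y : m != x -> m != y -> x != y ->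
  ~~ rows_coincide arr i i' m x -> ~~ rows_coincide arr i i' m y ->
  exists e, row_corner i i' e \/ row_corner i' i e.
Proof.
move=> mx my xy; rewrite /rows_coincide => dx dy.
have {}dx : arr (i', m) (i', x) = ~~ arr (i, m) (i, x).
  by move: dx; case: (arr (i, m) _); case: (arr _ _).
have {}dy : arr (i', m) (i', y) = ~~ arr (i, m) (i, y).
  by move: dy; case: (arr (i, m) _); case: (arr _ _).
have := (arr_hflip i mx, arr_hflip i my, arr_hflip i' mx, arr_hflip i' my).
case ax: (arr (i, m) (i, x)); case ay: (arr (i, m) (i, y)) => flips.
- by exists m; right; apply: (row_cornerI (i := i') mx my xy); rewrite ?flips ?dx ?dy ?ax ?ay.
- exists y; right; apply: (row_corner_mixed my mx (_ : y != x)); rewrite 1?eq_sym //;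
    by rewrite ?flips ?dx ?dy ?ax ?ay.
- by exists x; right; apply: (row_corner_mixed mx my xy); rewrite ?flips ?dx ?dy ?ax ?ay.
by exists m; left; apply: (row_cornerI mx my xy); rewrite ?flips ?dx ?dy ?ax ?ay.
Qed.

Lemma corner_of_many_differences i i' : 1 < n_rows_differ arr i i' ->
  exists e, row_corner i i' e \/ row_corner i' i e.
Proof.
have [a [b [c [ab ac bc]]]] := ord3_triple.
rewrite (n_rows_differE _ _ ab ac bc).
case/(@two_of_three (fun x y => ~~ rows_coincide arr i i' x y) a b c _ ab ac bc).
  by move=> x y; rewrite rows_coincide_sym.
by move=> m [x [y [mx my xy dx dy]]]; apply: corner_of_differ dx dy.
Qed.

Lemma loops_between_rows_corner i i' e : i != i' -> row_corner i i' e ->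
  loops_between_rows arr i i' != set0.
Proof.
move=> ii' hc; have v := corner_vertical ii' hc.
have /forallPn[j] : ~~ [forall j, arr (i, j) (i', j)].
  by apply/forallP => h; case: no_domination => /(_ i i' ii') + _; apply => j; apply: h.
rewrite -arr_vflip // => hj.
have je : j != e by apply: contraTneq hj => ->; rewrite arr_vflip // v.
apply/set0Pn; exists (rect i i' e j).
exact/rect_in_loops_between_rows/corner_loop.
Qed.

Lemma loops_between_rows_differ2 i i' : i != i' -> 1 < n_rows_differ arr i i' ->
  loops_between_rows arr i i' != set0.
Proof.
move=> ii' /corner_of_many_differences [e [hc|hc]].
  exact: loops_between_rows_corner hc.
by rewrite -loops_between_rowsC; apply: loops_between_rows_corner hc; rewrite eq_sym.
Qed.

Lemma rows_differ_everywhere i i' : n_rows_differ arr i i' = 3 ->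
  forall j j', j != j' -> ~~ rows_coincide arr i i' j j'.
Proof.
move=> hd j j' jj'; have [k /andP[jk j'k]] := ord3_third j j'.
move: hd; rewrite (n_rows_differE _ _ jj' jk j'k).
by case: (rows_coincide arr i i' j j'); case: (rows_coincide _ _ _ _ _);
  case: (rows_coincide _ _ _ _ _).
Qed.

(* The last column e of row i and the first column x of row i' both carry
   loops through them; the remaining column y closes a loop with one of them. *)
Lemma card_loops_between_reversed_rows i i' : i != i' -> n_rows_differ arr i i' = 3 ->
  #|loops_between_rows arr i i'| = 2.
Proof.
move=> ii' /rows_differ_everywhere hd.
have [e hc] : exists e, row_corner i i' e \/ row_corner i' i e.
  have [m [x [y [mx my xy]]]] := ord3_triple.
  exact: corner_of_differ (hd _ _ mx) (hd _ _ my).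
wlog {hc} hc : i i' ii' hd / row_corner i i' e => [hw|].
  case: hc => hc; first exact: hw.
  rewrite -loops_between_rowsC; apply: hw hc; rewrite 1?eq_sym // => j j' jj'.
  by rewrite rows_coincideC hd.
have [x [y [xe ye xy]]] := ord3_complement e.
wlog ixy : x y xe ye xy / arr (i, x) (i, y) => [hw|].
  case ixy: (arr (i, x) (i, y)); first exact: hw ixy.
  by apply: (hw y x) => //; rewrite 1?eq_sym // arr_hflip // ixy.
have i'i : i' != i by rewrite eq_sym.
have hc' : row_corner i' i x.
  have := hd _ _ xy; rewrite /rows_coincide ixy eq_sym eqb_id => i'xy.
  have /andP[ixe i'ex] := hc x xe.
  by apply: (row_cornerI (x := e) (y := y)); rewrite // 1?eq_sym // arr_hflip // i'xy.
have v := corner_vertical ii' hc.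
have v' := corner_vertical i'i hc'.
have loop_ex : loop_on i i' e x by rewrite /loop_on corner_loop.
have loop_y : loop_on i i' e y || loop_on i i' x y.
  case vy: (arr (i, y) (i', y)).
    by rewrite /loop_on (corner_loop i'i _ hc') ?orbT // eq_sym.
  by rewrite /loop_on corner_loop // arr_vflip // vy.
rewrite (card_loops_between_rowsE ii' (_ : e != x) (_ : e != y) xy) 1?eq_sym // loop_ex.
apply/eqP; rewrite eqn_leq -{1}loop_ex loop_on_count_le2.
by move: loop_y; case: (loop_on i i' e y); case: (loop_on i i' x y).
Qed.

(** * Three rows *)

Lemma loops_between_rows_disjoint i i' k : i != i' ->
  loops_between_rows arr i k :&: loops_between_rows arr i' k = set0.
Proof.
move=> ii'; apply/setP => S; rewrite in_setI !in_loops_between_rows in_set0.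
case: (boolP (S \in short_loops arr)) => //= /short_loopsP[a [a' [j [j' [h ->]]]]].
have aa' : a != a' by case/and3P: h.
rewrite !rect_rowsE; apply/negP => /andP[/andP[ha ha'] /andP[hb hb']].
by move: aa'; rewrite (pair_meet ii' ha hb) (pair_meet ii' ha' hb') eqxx.
Qed.

Lemma short_loops_cover i i' k : i != i' -> i != k -> i' != k ->
  short_loops arr =
  loops_between_rows arr i i' :|: loops_between_rows arr i k :|: loops_between_rows arr i' k.
Proof.
move=> ii' ik i'k; have cover := ord3_cover ii' ik i'k.
apply/setP => S; rewrite !in_setU !in_loops_between_rows.
case: (boolP (S \in short_loops arr)) => //= /short_loopsP[a [a' [j [j' [h ->]]]]].
have aa' : a != a' by case/and3P: h.
rewrite !rect_rowsE.
by case/or3P: (cover a) => /eqP ?; case/or3P: (cover a') => /eqP ?; subst a a';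
  rewrite ?eqxx //= ?orbT in aa' *.
Qed.

Lemma coincide_differ_third i i' k j j' : i != i' -> i != k -> i' != k -> j != j' ->
  rows_coincide arr i i' j j' -> ~~ rows_coincide arr i k j j'.
Proof.
move=> ii' ik i'k jj'; rewrite /rows_coincide => /eqP e1; apply/negP => /eqP e2.
have [_ nd] := no_domination; have cover := ord3_cover ii' ik i'k.
case b: (arr (i, j) (i, j')).
  by apply: (nd j j' jj') => r; case/or3P: (cover r) => /eqP->; rewrite -?e1 -?e2 b.
have j'j : j' != j by rewrite eq_sym.
by apply: (nd j' j j'j) => r; rewrite arr_hflip //;
  case/or3P: (cover r) => /eqP->; rewrite -?e1 -?e2 b.
Qed.

Lemma n_rows_coincide_le_differ i i' k : i != i' -> i != k -> i' != k ->
  n_rows_coincide arr i i' <= n_rows_differ arr i k.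
Proof.
move=> ii' ik i'k; apply/subset_leq_card/subsetP => p; rewrite !inE => /andP[pp hp].
by rewrite pp (coincide_differ_third ii' ik i'k) // -val_eqE /= neq_ltn pp.
Qed.

Lemma loops_between_coincident_rows i i' : i != i' -> n_rows_coincide arr i i' = 3 ->
  loops_between_rows arr i i' = set0.
Proof.
move=> ii' hc; apply: cards0_eq; apply/eqP; rewrite -leqn0.
by have := card_loops_le_differ ii'; have := n_rows_coincide_add_differ i i'; rewrite hc; lia.
Qed.

Lemma row_properties_hold : row_properties arr.
Proof.
move=> i i' ii'; split; first exact: loops_between_rows_differ2.
split; first exact: card_loops_between_reversed_rows.
move=> k ki ki'; have ik : i != k by rewrite eq_sym.
have i'k : i' != k by rewrite eq_sym.
have i'i : i' != i by rewrite eq_sym.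
have card_union : #|loops_between_rows arr i k :|: loops_between_rows arr i' k| =
                  #|loops_between_rows arr i k| + #|loops_between_rows arr i' k|.
  by rewrite cardsU loops_between_rows_disjoint // cards0 subn0.
have le_ik := n_rows_coincide_le_differ ii' ik i'k.
have le_i'k := n_rows_coincide_le_differ i'i i'k ik; rewrite n_rows_coincideC in le_i'k.
split=> hc.
  have ne := loops_between_rows_differ2 ik (leq_trans hc le_ik).
  have ne' := loops_between_rows_differ2 i'k (leq_trans hc le_i'k).
  split=> //; rewrite (short_loops_cover ii' ik i'k) -setUA.
  apply: leq_trans (subset_leq_card (subsetUr _ _)).
  by rewrite card_union; move: ne ne'; rewrite -!card_gt0; lia.
have d3 j : n_rows_coincide arr i i' <= n_rows_differ arr j k -> n_rows_differ arr j k = 3.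
  by rewrite hc => le; have := n_rows_coincide_add_differ j k; lia.
rewrite (short_loops_cover ii' ik i'k) (loops_between_coincident_rows ii' hc) set0U.
have c_ik := card_loops_between_reversed_rows ik (d3 i le_ik).
have c_i'k := card_loops_between_reversed_rows i'k (d3 i' le_i'k).
by rewrite card_union c_ik c_i'k.
Qed.

End Rows.

(** * Transposition *)

Definition transpose_cell (c : cell) : cell := (c.2, c.1).
Definition transpose_diagram (arr : rel cell) : rel cell :=
  fun c d => arr (transpose_cell c) (transpose_cell d).
Definition transpose_set (S : {set cell}) : {set cell} := transpose_cell @^-1: S.

Lemma transpose_cellK : involutive transpose_cell. Proof. by case. Qed.

Lemma transpose_setK : involutive transpose_set.
Proof. by move=> S; apply/setP => c; rewrite !inE transpose_cellK. Qed.

Lemma adjacent_transpose c d : adjacent (transpose_cell c) (transpose_cell d) = adjacent c d.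
Proof. exact: orbC. Qed.

Lemma transpose_rect i i' j j' : transpose_set (rect i i' j j') = rect j j' i' i.
Proof.
apply/setP => -[a b]; rewrite !inE !xpair_eqE /=.
by case: (a == j); case: (a == j'); case: (b == i); case: (b == i').
Qed.

Section Transpose.

Variable arr : rel cell.

Lemma transition_diagram_transpose :
  transition_diagram arr -> transition_diagram (transpose_diagram arr).
Proof.
case=> hv hh ha; split=> [j i i' | i j j' | c d]; [exact: hh | exact: hv |].
by move/ha; rewrite adjacent_transpose.
Qed.

Lemma cond1_transpose : cond1 arr -> cond1 (transpose_diagram arr).
Proof. by case=> hr hc; split=> [i j1 j2 j3 | j i1 i2 i3]; [apply: hc | apply: hr]. Qed.

Lemma cond2_transpose : cond2 arr -> cond2 (transpose_diagram arr).
Proof. by case=> hr hc; split=> [i i' | j j']; [apply: hc | apply: hr]. Qed.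

Lemma cond3_transpose : cond3 arr -> cond3 (transpose_diagram arr).
Proof.
move=> h c hc; apply: (h (transpose_cell c)) => d.
rewrite -{1}(transpose_cellK d) adjacent_transpose => /hc.
by rewrite /transpose_diagram transpose_cellK.
Qed.

Lemma cond4_transpose : cond4 arr -> cond4 (transpose_diagram arr).
Proof.
move=> h c hc; apply: (h (transpose_cell c)) => d.
rewrite -{1}(transpose_cellK d) adjacent_transpose => /hc.
by rewrite /transpose_diagram transpose_cellK.
Qed.

Lemma short_loop_at_transpose i i' j j' :
  short_loop_at (transpose_diagram arr) i i' j j' = short_loop_at arr j j' i' i.
Proof.
rewrite /short_loop_at /transpose_diagram /= (eq_sym i').
move: (arr (j, i) (j, i')) (arr (j, i') (j', i')) (arr (j', i') (j', i)) (arr (j', i) (j, i)).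
by case: (i != i'); case: (j != j') => -[] [] [] [].
Qed.

Lemma short_loops_transpose :
  short_loops (transpose_diagram arr) = transpose_set @^-1: short_loops arr.
Proof.
apply/setP => S; rewrite [in RHS]in_set.
apply/(short_loopsP (transpose_diagram arr) S)/(short_loopsP arr).
  case=> [i [i' [j [j' [h ->]]]]]; rewrite transpose_rect.
  by exists j, j', i', i; rewrite -short_loop_at_transpose.
case=> [a [a' [b [b' [h /(congr1 transpose_set)]]]]].
rewrite transpose_setK transpose_rect => ->.
by exists b, b', a', a; rewrite short_loop_at_transpose short_loop_at_opp.
Qed.

Lemma in_loops_between_cols S j j' : (S \in loops_between_cols arr j j') =
  (S \in short_loops arr) && [forall c in S, (c.2 == j) || (c.2 == j')].
Proof. by rewrite inE. Qed.

Lemma loops_between_rows_transpose j j' :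
  loops_between_rows (transpose_diagram arr) j j' =
  transpose_set @^-1: loops_between_cols arr j j'.
Proof.
apply/setP => S; rewrite [in RHS]in_set in_loops_between_rows in_loops_between_cols.
rewrite short_loops_transpose [in X in X && _]in_set; congr (_ && _).
apply/forall_inP/forall_inP => h c hc.
  by apply: (h (transpose_cell c)); rewrite in_set in hc.
by apply: (h (transpose_cell c)); rewrite in_set transpose_cellK.
Qed.

Lemma card_loops_between_rows_transpose j j' :
  #|loops_between_rows (transpose_diagram arr) j j'| = #|loops_between_cols arr j j'|.
Proof.
by rewrite loops_between_rows_transpose card_preimset //; apply: inv_inj transpose_setK.
Qed.

Lemma card_short_loops_transpose :
  #|short_loops (transpose_diagram arr)| = #|short_loops arr|.
Proof. by rewrite short_loops_transpose card_preimset //; apply: inv_inj transpose_setK. Qed.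

(* [n_rows_differ] and [n_rows_coincide] of the transpose are convertible to
   [n_cols_differ] and [n_cols_coincide]: only the loop sets are rewritten. *)
Lemma column_properties_transpose :
  row_properties (transpose_diagram arr) -> column_properties arr.
Proof.
have nonempty j j' : (loops_between_rows (transpose_diagram arr) j j' != set0) =
                     (loops_between_cols arr j j' != set0).
  by rewrite -!card_gt0 card_loops_between_rows_transpose.
move=> h j j' jj'; have [h1 [h2 h3]] := h j j' jj'.
split=> [/h1 | ]; first by rewrite nonempty.
split=> [/h2 | k kj kj']; first by rewrite card_loops_between_rows_transpose.
have [h4 h5] := h3 k kj kj'; split=> [/h4 | /h5] [a b c].
  by split; [rewrite -nonempty | rewrite -nonempty | rewrite -card_short_loops_transpose].
by split; [rewrite -card_loops_between_rows_transpose
          | rewrite -card_loops_between_rows_transpose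
          | rewrite -card_short_loops_transpose].
Qed.

End Transpose.

Theorem mainTheorem5 (arr : rel cell) :
  transition_diagram arr -> cond1 arr -> cond2 arr -> cond3 arr -> cond4 arr ->
  cond5 arr ->
  (forall i i' : 'I_3, i != i' ->
     (2 <= n_rows_differ arr i i' -> loops_between_rows arr i i' != set0) /\
     (n_rows_differ arr i i' = 3 -> #|loops_between_rows arr i i'| = 2) /\
     (forall k : 'I_3, k != i -> k != i' ->
        (2 <= n_rows_coincide arr i i' ->
           [/\ loops_between_rows arr i k != set0,
               loops_between_rows arr i' k != set0
             & 2 <= #|short_loops arr|]) /\
        (n_rows_coincide arr i i' = 3 ->
           [/\ #|loops_between_rows arr i k| = 2,
               #|loops_between_rows arr i' k| = 2
             & #|short_loops arr| = 4]))) /\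
  (forall j j' : 'I_3, j != j' ->
     (2 <= n_cols_differ arr j j' -> loops_between_cols arr j j' != set0) /\
     (n_cols_differ arr j j' = 3 -> #|loops_between_cols arr j j'| = 2) /\
     (forall k : 'I_3, k != j -> k != j' ->
        (2 <= n_cols_coincide arr j j' ->
           [/\ loops_between_cols arr j k != set0,
               loops_between_cols arr j' k != set0
             & 2 <= #|short_loops arr|]) /\
        (n_cols_coincide arr j j' = 3 ->
           [/\ #|loops_between_cols arr j k| = 2,
               #|loops_between_cols arr j' k| = 2
             & #|short_loops arr| = 4]))).
Proof.
move=> td h1 h2 h3 h4 _; split; first exact: row_properties_hold.
apply/column_properties_transpose/row_properties_hold.
- exact: transition_diagram_transpose.
- exact: cond1_transpose.
- exact: cond2_transpose.
- exact: cond3_transpose.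
exact: cond4_transpose.
Qed.
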